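(* Let $G=(V,E)$ be an unweighted undirected graph with $n$ vertices and $m=|E|$ edges, and let $H$ be a $(1\pm\varepsilon)$-spectral sparsifier of $G$ for some small enough constant $\varepsilon>0$. Let $\widehat{H}$ denote the unweighted version of $H$. If for a pair of vertices $u,v\in V$ we set $s:=d_{\widehat{H}}(u,v)$, then $$R^G_{u,v}=\widetilde{\Omega}\!\left(\frac{s^2}{m}\right)\quad\text{and}\quad R^H_{u,v}=\widetilde{\Omega}\!\left(\frac{s^2}{m}\right).$$
   Context: A $(1\pm\varepsilon)$-spectral sparsifier of $G$ is a weighted graph $H=(V,E_H,w)$ with $E_H\subseteq E$ and positive weights such that $(1-\varepsilon)L_H\preceq L_G\preceq(1+\varepsilon)L_H$, where $L_G=B_G^\top B_G$ ($B_G$ the edge–vertex incidence matrix), $L_H=B_H^\top WB_H$ ($W$ the diagonal matrix of edge weights), and $A\preceq B$ means $x^\top Ax\le x^\top Bx$ for all $x$. $\widehat{H}$ is the graph $(V,E_H)$ with all weights equal to $1$, and $d_{\widehat{H}}$ its shortest-path (hop) distance. The effective resistance between $u,v$ in a graph $K$ is $R^K_{u,v}=b_{uv}^\top L_K^{+}b_{uv}$, where $b_{uv}=\chi_u-\chi_v$ and $L_K^+$ is the Moore–Penrose pseudoinverse. $\widetilde{\Omega}(f)$ means $f/\mathrm{polylog}(n)$. *)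

From HB Require Import structures.
From Stdlib Require Import Reals ClassicalEpsilon.
From mathcomp Require Import all_boot all_order all_algebra.
From mathcomp Require Import Rstruct.
Set Implicit Arguments. Unset Strict Implicit. Unset Printing Implicit Defensive.
Import Order.TTheory GRing.Theory Num.Theory.
Local Open Scope ring_scope.

(* Vertices are 'I_n.  An edge {u,v} of a simple undirected graph is stored
   once, as the ordered pair (u,v) with u < v. *)
Definition simple_edges (n : nat) (E : {set 'I_n * 'I_n}) : Prop :=
  forall p, p \in E -> (p.1 < p.2)%N.

Definition bvec (n : nat) (u v : 'I_n) : 'rV[R]_n :=
  delta_mx 0 u - delta_mx 0 v.

Definition laplacian (n : nat) (E : {set 'I_n * 'I_n})
    (w : 'I_n * 'I_n -> R) : 'M[R]_n :=
  \sum_(p in E) w p *: ((bvec p.1 p.2)^T *m bvec p.1 p.2).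

Definition loewner_le (n : nat) (A B : 'M[R]_n) : Prop :=
  forall x : 'rV[R]_n, (x *m A *m x^T) 0 0 <= (x *m B *m x^T) 0 0.

Definition spectral_sparsifier (n : nat) (eps : R) (E EH : {set 'I_n * 'I_n})
    (w : 'I_n * 'I_n -> R) : Prop :=
  EH \subset E /\ (forall p, p \in EH -> 0 < w p) /\
  loewner_le ((1 - eps) *: laplacian EH w) (laplacian E (fun _ => 1)) /\
  loewner_le (laplacian E (fun _ => 1)) ((1 + eps) *: laplacian EH w).

Definition is_MP_pinv (n : nat) (A X : 'M[R]_n) : Prop :=
  [/\ A *m X *m A = A, X *m A *m X = X, (A *m X)^T = A *m X & (X *m A)^T = X *m A].

Definition mp_pinv (n : nat) (A : 'M[R]_n) : 'M[R]_n :=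
  epsilon (inhabits 0) (fun X => is_MP_pinv A X).

Definition eff_res (n : nat) (L : 'M[R]_n) (u v : 'I_n) : R :=
  (bvec u v *m mp_pinv L *m (bvec u v)^T) 0 0.

Definition unw_adj (n : nat) (EH : {set 'I_n * 'I_n}) : rel 'I_n :=
  fun x y => ((x, y) \in EH) || ((y, x) \in EH).

Definition hop_dist (n : nat) (adj : rel 'I_n) (u v : 'I_n) (s : nat) : Prop :=
  (exists p : seq 'I_n, [/\ path adj u p, last u p = v & size p = s]) /\
  (forall p : seq 'I_n, path adj u p -> last u p = v -> (s <= size p)%N).

(* Let x be the hop distance from u in the unweighted sparsifier, truncated
   at s = d(u, v).  It changes by at most 1 across every edge of H, so its
   energy x^T L_H x is at most the total weight of H, which is tr L_H / 2
   <= tr L_G / (2 (1 - eps)) = m / (1 - eps); moreover x^T L_G x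
   <= (1 + eps) x^T L_H x.  As b_uv lies in the range of L when u and v
   are connected, Cauchy-Schwarz for the form of L gives
   (x_u - x_v)^2 <= R_uv x^T L x, i.e. s^2 <= R_uv O(m) for both G and H:
   the bound even holds without polylogarithmic loss. *)

From HB Require Import structures.
From Stdlib Require Import Reals ClassicalEpsilon.
From mathcomp Require Import all_boot all_order all_algebra.
From mathcomp Require Import Rstruct.
From mathcomp Require Import ring lra.
Import Order.TTheory GRing.Theory Num.Theory.
Set Implicit Arguments. Unset Strict Implicit. Unset Printing Implicit Defensive.
Local Open Scope ring_scope.

Definition qform (n : nat) (A : 'M[R]_n) (x y : 'rV[R]_n) : R := (x *m A *m y^T) 0 0.

Section QuadraticForm.
Variables (n : nat) (A : 'M[R]_n).

Lemma qformDZ (x y : 'rV[R]_n) (t : R) :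
  qform A (x + t *: y) (x + t *: y) =
  qform A x x + t * (qform A x y + qform A y x) + t ^+ 2 * qform A y y.
Proof.
rewrite /qform linearD linearZ /= mulmxDl mulmxDr !mulmxDl -!scalemxAl -!scalemxAr.
by rewrite !mxE; ring.
Qed.

Hypothesis A_sym : A^T = A.

Lemma qformC (x y : 'rV[R]_n) : qform A x y = qform A y x.
Proof.
rewrite /qform; have -> : x *m A *m y^T = (y *m A *m x^T)^T.
  by rewrite !trmx_mul trmxK A_sym mulmxA.
by rewrite mxE.
Qed.

Hypothesis A_psd : forall z : 'rV[R]_n, 0 <= qform A z z.

Lemma qform_cauchy_schwarz (x y : 'rV[R]_n) :
  qform A x y ^+ 2 <= qform A x x * qform A y y.
Proof.
(* Minimise the nonnegative quadratic t |-> q(x + t y). *)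
have Q t : 0 <= qform A x x + t * (qform A x y + qform A x y) + t ^+ 2 * qform A y y.
  by rewrite {2}[qform A x y]qformC -qformDZ.
set a := qform A x x in Q *; set b := qform A x y in Q *; set c := qform A y y in Q *.
have [c0|c_neq0] := eqVneq c 0.
  have [b0|b_neq0] := eqVneq b 0; first by rewrite b0 c0 expr0n mulr0.
  have bb_neq0 : b + b != 0 by rewrite -mulr2n mulrn_eq0 negb_or b_neq0.
  have := Q (- (a + 1) / (b + b)); rewrite c0 mulr0 addr0 mulfVK //.
  lra.
have c_gt0 : 0 < c by rewrite lt_def c_neq0 A_psd.
have := Q (- b / c); rewrite -(ler_pM2l c_gt0) mulr0.
set t := - b / c; have ct : c * t = - b by rewrite /t mulrCA divff // mulr1.
nra.
Qed.
End QuadraticForm.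

Lemma qformZ (n : nat) (c : R) (A : 'M[R]_n) (x y : 'rV[R]_n) :
  qform (c *: A) x y = c * qform A x y.
Proof. by rewrite /qform -scalemxAr -scalemxAl mxE. Qed.

Lemma loewner_le_mxtrace (n : nat) (A B : 'M[R]_n) :
  loewner_le A B -> \tr A <= \tr B.
Proof.
have diag (M : 'M[R]_n) i : qform M (delta_mx 0 i) (delta_mx 0 i) = M i i.
  by rewrite /qform trmx_delta -rowE -colE !mxE.
by move=> AB; apply: ler_sum => i _; rewrite -!diag; apply: AB.
Qed.

Lemma dot_self_eq0 (n : nat) (x : 'rV[R]_n) : (x *m x^T) 0 0 = 0 -> x = 0.
Proof.
rewrite mxE => /eqP; rewrite psumr_eq0 => [/allP x2_eq0|i _]; last first.
  by rewrite mxE -expr2 sqr_ge0.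
apply/rowP => j; have := x2_eq0 j (mem_index_enum _).
by rewrite mxE -expr2 sqrf_eq0 mxE => /eqP.
Qed.

Lemma dot_bvec (n : nat) (x : 'rV[R]_n) (a b : 'I_n) :
  (x *m (bvec a b)^T) 0 0 = x 0 a - x 0 b.
Proof. by rewrite /bvec linearB /= !trmx_delta mulmxBr -!colE !mxE. Qed.

Lemma row_free_gram_unit (r m : nat) (F : 'M[R]_(r, m)) :
  row_free F -> F *m F^T \in unitmx.
Proof.
move=> F_free; rewrite -row_free_unit; apply: inj_row_free => x xFF0.
have xF0 : x *m F = 0.
  by apply: dot_self_eq0; rewrite trmx_mul mulmxA -(mulmxA x) xFF0 mul0mx mxE.
by apply/eqP; rewrite -(mulmx_free_eq0 _ F_free) xF0.
Qed.

(* For a full-rank factorization A = F G, the pseudoinverse is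
   G^T (G G^T)^-1 (F^T F)^-1 F^T. *)
Lemma full_rank_factor_MP_pinv (n r : nat) (F : 'M[R]_(n, r)) (G : 'M[R]_(r, n)) :
  row_free G -> row_free F^T -> exists X, is_MP_pinv (F *m G) X.
Proof.
move=> /row_free_gram_unit uG /row_free_gram_unit; rewrite trmxK => uF.
set P := invmx (G *m G^T); set Q := invmx (F^T *m F).
have GP k (M : 'M_(k, r)) : M *m G *m G^T *m P = M.
  by rewrite -!mulmxA (mulmxA G) mulmxV // mulmx1.
have QF k (M : 'M_(k, r)) : M *m Q *m F^T *m F = M.
  by rewrite -!mulmxA mulVmx // mulmx1.
have PT : P^T = P by rewrite /P trmx_inv trmx_mul trmxK.
have QT : Q^T = Q by rewrite /Q trmx_inv trmx_mul trmxK.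
exists (G^T *m P *m Q *m F^T); split; rewrite !mulmxA ?GP ?QF //.
  by rewrite !trmx_mul trmxK QT !mulmxA.
by rewrite !trmx_mul trmxK PT !mulmxA.
Qed.

Lemma mp_pinvP (n : nat) (A : 'M[R]_n) : is_MP_pinv A (mp_pinv A).
Proof.
apply: epsilon_spec; rewrite -(mulmx_base A).
apply: full_rank_factor_MP_pinv; first exact: row_base_free.
by rewrite /row_free mxrank_tr; exact: col_base_full.
Qed.

Section Laplacian.
Variables (n : nat) (E : {set 'I_n * 'I_n}) (w : 'I_n * 'I_n -> R).
Local Notation L := (laplacian E w).

Lemma qform_laplacian (x y : 'rV[R]_n) :
  qform L x y = \sum_(p in E) w p * ((x 0 p.1 - x 0 p.2) * (y 0 p.1 - y 0 p.2)).
Proof.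
rewrite /qform /laplacian mulmx_sumr mulmx_suml summxE; apply: eq_bigr => p _.
rewrite -scalemxAr -scalemxAl mxE.
have -> (b : 'rV[R]_n) : x *m (b^T *m b) *m y^T = (x *m b^T) *m (y *m b^T)^T.
  by rewrite trmx_mul trmxK !mulmxA.
by rewrite -!dot_bvec [(_ *m _) 0 0]mxE big_ord1 [_^T _ _]mxE.
Qed.

Lemma laplacian_sym : L^T = L.
Proof.
rewrite /laplacian linear_sum; apply: eq_bigr => p _.
by rewrite linearZ /= trmx_mul trmxK.
Qed.

Lemma mxtrace_laplacian : simple_edges E -> \tr L = 2 * \sum_(p in E) w p.
Proof.
move=> E_simple; rewrite /laplacian raddf_sum mulr_sumr; apply: eq_bigr => p pE.
rewrite /= mxtraceZ mxtrace_mulC mulrC; congr (_ * _).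
rewrite /mxtrace big_ord1 dot_bvec !mxE !eqxx.
have /negPf p_ne : p.1 != p.2 by rewrite -val_eqE ltn_eqF ?E_simple.
by rewrite p_ne eq_sym p_ne /=; lra.
Qed.

Section NonnegativeWeights.
Hypothesis w_ge0 : forall p, p \in E -> 0 <= w p.

Lemma laplacian_psd (x : 'rV[R]_n) : 0 <= qform L x x.
Proof.
rewrite qform_laplacian; apply: sumr_ge0 => p pE.
by rewrite mulr_ge0 ?w_ge0 // -expr2 sqr_ge0.
Qed.

Lemma qform_laplacian_le_weight (x : 'rV[R]_n) :
  (forall p, p \in E -> (x 0 p.1 - x 0 p.2) ^+ 2 <= 1) ->
  qform L x x <= \sum_(p in E) w p.
Proof.
move=> x_lip; rewrite qform_laplacian; apply: ler_sum => p pE.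
by rewrite -expr2 ler_piMr ?w_ge0 ?x_lip.
Qed.
End NonnegativeWeights.

Hypothesis w_gt0 : forall p, p \in E -> 0 < w p.

Lemma laplacian_kernel_path (z : 'rV[R]_n) (u : 'I_n) (p : seq 'I_n) :
  L *m z^T = 0 -> path (unw_adj E) u p -> z 0 u = z 0 (last u p).
Proof.
move=> Lz0.
have z_edge q : q \in E -> z 0 q.1 = z 0 q.2.
  move=> qE; apply/eqP; rewrite -subr_eq0 -sqrf_eq0.
  have : qform L z z == 0 by rewrite /qform -mulmxA Lz0 mulmx0 mxE.
  rewrite qform_laplacian psumr_eq0 => [/allP/(_ q (mem_index_enum _))|r rE].
    by rewrite qE mulf_eq0 (gt_eqF (w_gt0 qE)) expr2.
  by rewrite mulr_ge0 ?(ltW (w_gt0 rE)) // -expr2 sqr_ge0.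
elim: p u => //= a p IH u /andP[ua ap]; rewrite -IH //.
by case/orP: ua => [/z_edge | /z_edge ->].
Qed.
End Laplacian.

Section EffectiveResistance.
Variables (n : nat) (E : {set 'I_n * 'I_n}) (w : 'I_n * 'I_n -> R).
Variables (u v : 'I_n) (p : seq 'I_n).
Hypothesis w_gt0 : forall q, q \in E -> 0 < w q.
Hypotheses (p_path : path (unw_adj E) u p) (p_last : last u p = v).
Local Notation L := (laplacian E w).
Local Notation X := (mp_pinv L).
Local Notation b := (bvec u v).

Let w_ge0 q (qE : q \in E) : 0 <= w q := ltW (w_gt0 qE).

(* b_uv is orthogonal to the kernel of L, which is spanned by the indicators
   of connected components; hence X L, the projection onto the row space of L,
   fixes it. *)
Lemma bvec_pinv_laplacian : b *m X *m L = b.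
Proof.
have [LXL _ _ XL_sym] := mp_pinvP L.
set z := b - b *m X *m L.
have Lz0 : L *m z^T = 0.
  by rewrite linearB /= mulmxBr -mulmxA trmx_mul XL_sym !mulmxA LXL subrr.
have zXL0 : z *m X *m L = 0.
  have -> : z *m X *m L = (X *m (L *m z^T))^T.
    by rewrite -mulmxA -XL_sym !trmx_mul trmxK laplacian_sym mulmxA.
  by rewrite Lz0 mulmx0 trmx0.
have zb0 : (z *m b^T) 0 0 = 0.
  by rewrite dot_bvec -p_last (laplacian_kernel_path w_gt0 Lz0 p_path) subrr.
have /dot_self_eq0 : (z *m z^T) 0 0 = 0.
  by rewrite {2}/z linearB /= mulmxBr -(mulmxA b) trmx_mul XL_sym !mulmxA zXL0 mul0mx subr0.
by move/eqP; rewrite subr_eq0 => /eqP.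
Qed.

Lemma qform_pinv_bvec (x : 'rV[R]_n) : qform L x (b *m X) = x 0 u - x 0 v.
Proof.
by rewrite -dot_bvec -[in RHS]bvec_pinv_laplacian /qform !trmx_mul laplacian_sym !mulmxA.
Qed.

Lemma eff_res_qform : eff_res L u v = qform L (b *m X) (b *m X).
Proof. by rewrite qform_pinv_bvec -dot_bvec. Qed.

Lemma eff_res_ge0 : 0 <= eff_res L u v.
Proof. by rewrite eff_res_qform laplacian_psd. Qed.

(* The dual form of Thomson's principle. *)
Lemma potential_drop_le_eff_res (x : 'rV[R]_n) :
  (x 0 u - x 0 v) ^+ 2 <= eff_res L u v * qform L x x.
Proof.
rewrite eff_res_qform -qform_pinv_bvec mulrC.
exact: qform_cauchy_schwarz (laplacian_sym E w) (laplacian_psd w_ge0) _ _.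
Qed.
End EffectiveResistance.

Section TruncatedHopDistance.
Variables (n : nat) (adj : rel 'I_n) (u : 'I_n).

Fixpoint ball (k : nat) : {set 'I_n} :=
  if k is k'.+1 then ball k' :|: [set c | [exists a in ball k', adj a c]]
  else [set u].

Lemma ball_center k : u \in ball k.
Proof. by elim: k => [|k IH] /=; rewrite ?set11 // in_setU IH. Qed.

Lemma ball_adj k a c : a \in ball k -> adj a c -> c \in ball k.+1.
Proof.
move=> a_in ac; rewrite /= in_setU inE; apply/orP; right.
by apply/existsP; exists a; rewrite a_in.
Qed.

Lemma ball_walk k a : a \in ball k ->
  exists p, [/\ path adj u p, last u p = a & (size p <= k)%N].
Proof.
elim: k a => [|k IH] a /=; first by rewrite inE => /eqP ->; exists [::].
rewrite in_setU inE => /orP[/IH [p [up pa pk]] | /existsP [c /andP [/IH [p [up pc pk]] ca]]].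
  by exists p; split; rewrite // ltnW.
by exists (rcons p a); rewrite rcons_path last_rcons size_rcons up pc ca.
Qed.

(* The number of balls of radius < s that miss a, i.e. min (d(u, a), s). *)
Definition trunc_dist (s : nat) (a : 'I_n) : nat := \sum_(k < s) (a \notin ball k).

Lemma trunc_dist_center s : trunc_dist s u = 0%N.
Proof. by rewrite /trunc_dist big1 // => k _; rewrite ball_center. Qed.

Lemma trunc_dist_adj s a c : adj a c -> (trunc_dist s c <= (trunc_dist s a).+1)%N.
Proof.
move=> ac; have step k : ((c \notin ball k.+1) <= (a \notin ball k))%N.
  by case: (boolP (a \in ball k)) => [/ball_adj/(_ ac) -> | _]; rewrite ?leq_b1.
case: s => [|s]; first by rewrite /trunc_dist !big_ord0.
rewrite /trunc_dist big_ord_recl big_ord_recr -[(_ + _).+1]addn1 addnC.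
rewrite leq_add ?leq_b1 // (leq_trans _ (leq_addr _ _)) //.
by apply: leq_sum => k _; exact: step.
Qed.

Lemma trunc_dist_far s v :
  (forall p, path adj u p -> last u p = v -> (s <= size p)%N) -> trunc_dist s v = s.
Proof.
move=> far; rewrite /trunc_dist -[in RHS](card_ord s) -sum1_card.
apply: eq_bigr => k _; case: (boolP (v \in ball k)) => // /ball_walk [p [up pv pk]].
by have := leq_trans (far p up pv) pk; rewrite leqNgt ltn_ord.
Qed.
End TruncatedHopDistance.

Definition hop_potential (n : nat) (adj : rel 'I_n) (u : 'I_n) (s : nat) : 'rV[R]_n :=
  \row_a (trunc_dist adj u s a)%:R.

Lemma hop_potential_adj (n : nat) (adj : rel 'I_n) (u a c : 'I_n) (s : nat) :
  adj a c -> adj c a ->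
  (hop_potential adj u s 0 a - hop_potential adj u s 0 c) ^+ 2 <= 1.
Proof.
move=> /(trunc_dist_adj u s) ca /(trunc_dist_adj u s) ac; rewrite !mxE.
move: ca ac; rewrite -!(ler_nat R) -!natr1.
set da := _%:R; set dc := _%:R; nra.
Qed.

Lemma hop_potential_drop (n : nat) (adj : rel 'I_n) (u v : 'I_n) (s : nat) :
  hop_dist adj u v s -> hop_potential adj u s 0 u - hop_potential adj u s 0 v = - s%:R.
Proof. by case=> _ far; rewrite !mxE trunc_dist_center trunc_dist_far // sub0r. Qed.

Lemma unw_adjC (n : nat) (E : {set 'I_n * 'I_n}) : symmetric (unw_adj E).
Proof. by move=> a c; rewrite /unw_adj orbC. Qed.

Lemma unw_adj_pair (n : nat) (E : {set 'I_n * 'I_n}) p : p \in E -> unw_adj E p.1 p.2.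
Proof. by rewrite /unw_adj -surjective_pairing => ->. Qed.

Lemma path_unw_adj_sub (n : nat) (E E' : {set 'I_n * 'I_n}) u p :
  E \subset E' -> path (unw_adj E) u p -> path (unw_adj E') u p.
Proof.
move=> /subsetP EE'; apply: sub_path => a c.
by rewrite /unw_adj => /orP[/EE' -> | /EE' ->]; rewrite ?orbT.
Qed.

Lemma qform_hop_potential_le_weight (n : nat) (E : {set 'I_n * 'I_n})
    (w : 'I_n * 'I_n -> R) (u : 'I_n) (s : nat) :
  (forall q, q \in E -> 0 <= w q) ->
  qform (laplacian E w) (hop_potential (unw_adj E) u s) (hop_potential (unw_adj E) u s)
    <= \sum_(q in E) w q.
Proof.
move=> w_ge0; apply: qform_laplacian_le_weight => // q qE.
apply: hop_potential_adj; first exact: unw_adj_pair.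
by rewrite unw_adjC; exact: unw_adj_pair.
Qed.

Lemma sparsifier_weight_le (n : nat) (eps : R) (E EH : {set 'I_n * 'I_n})
    (w : 'I_n * 'I_n -> R) :
  eps <= 1 / 2 -> simple_edges E -> spectral_sparsifier eps E EH w ->
  \sum_(q in EH) w q <= 2 * #|E|%:R.
Proof.
move=> eps_le E_simple [/subsetP EH_sub [w_gt0 [lo _]]].
have EH_simple : simple_edges EH by move=> q /EH_sub/E_simple.
have := loewner_le_mxtrace lo.
rewrite mxtraceZ !mxtrace_laplacian // sumr_const.
have : 0 <= \sum_(q in EH) w q by apply: sumr_ge0 => q /w_gt0/ltW.
nra.
Qed.

Lemma ratio_le_of_energy_bound (t r e m : R) :
  0 <= r -> t ^+ 2 <= r * e -> e <= 3 * m -> 1 / 3 * t ^+ 2 / m <= r.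
Proof.
move=> r_ge0 t_le e_le; have [m_le0 | m_gt0] := lerP m 0.
  apply: le_trans r_ge0; rewrite mulr_ge0_le0 ?invr_le0 // mulr_ge0 ?sqr_ge0 //; lra.
rewrite ler_pdivrMr //; nra.
Qed.

Theorem corollary4p3 :
  exists eps0 : R, 0 < eps0 /\
  forall eps : R, 0 < eps -> eps <= eps0 ->
  exists c : R, 0 < c /\ exists k : nat,
  forall (n : nat) (E EH : {set 'I_n * 'I_n}) (w : 'I_n * 'I_n -> R)
         (u v : 'I_n) (s : nat),
    (2 <= n)%N ->
    simple_edges E ->
    spectral_sparsifier eps E EH w ->
    hop_dist (unw_adj EH) u v s ->
    c * (s%:R ^+ 2) / (#|E|%:R * (ln n%:R) ^+ k)
      <= eff_res (laplacian E (fun _ => 1)) u v /\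
    c * (s%:R ^+ 2) / (#|E|%:R * (ln n%:R) ^+ k)
      <= eff_res (laplacian EH w) u v.
Proof.
exists (1 / 2); split => [|eps eps_gt0 eps_le]; first lra.
exists (1 / 3); split; first lra.
exists 0%N => n E EH w u v s _ E_simple sparsifier dist_uv.
have [EH_sub [w_gt0 [_ hi]]] := sparsifier.
have [[p [p_path p_last _]] _] := dist_uv.
have pG_path := path_unw_adj_sub EH_sub p_path.
rewrite expr0 mulr1.
set x := hop_potential (unw_adj EH) u s.
have drop : (x 0 u - x 0 v) ^+ 2 = s%:R ^+ 2 by rewrite hop_potential_drop // sqrrN.
have energyH : qform (laplacian EH w) x x <= 2 * #|E|%:R.
  apply: le_trans _ (sparsifier_weight_le eps_le E_simple sparsifier).
  exact: qform_hop_potential_le_weight (fun q qEH => ltW (w_gt0 q qEH)).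
have energyG : qform (laplacian E (fun=> 1)) x x <= 3 * #|E|%:R.
  have : qform (laplacian E (fun=> 1)) x x <= qform ((1 + eps) *: laplacian EH w) x x.
    exact: hi.
  have := laplacian_psd (fun q qEH => ltW (w_gt0 q qEH)) x.
  rewrite qformZ; nra.
have one_gt0 q (_ : q \in E) : 0 < (1 : R) := ltr01.
split; apply: ratio_le_of_energy_bound; rewrite -?drop.
- exact: eff_res_ge0 one_gt0 pG_path p_last.
- exact: potential_drop_le_eff_res one_gt0 pG_path p_last x.
- exact: energyG.
- exact: eff_res_ge0 w_gt0 p_path p_last.
- exact: potential_drop_le_eff_res w_gt0 p_path p_last x.
- by apply: le_trans energyH _; rewrite ler_wpM2r ?ler0n //; lra.
Qed.
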